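(* Let $m\ge1$, let $(t_{i,j})$ be positive reals with $t_{i+m,j-m}=t_{i,j}$ and $t_{i+2,j+2}=t_{i,j}$, and let $T_{i,j,k}$ be the solution of the $T$-system with initial data $T_{i,j,(i+j+1\bmod2)}=t_{i,j}$. For $k\ge1$, $i+j+k\equiv0\pmod2$, let $L_{i,j,k}=\frac{T_{i+1,j,k}T_{i-1,j,k}}{T_{i,j,k+1}T_{i,j,k-1}}$ and $R_{i,j,k}=\frac{T_{i,j+1,k}T_{i,j-1,k}}{T_{i,j,k+1}T_{i,j,k-1}}$. Then for all such $(i,j,k)$, $$L_{i+2,j+2,k}=L_{i,j,k},\quad L_{i+m,j-m,k}=L_{i,j,k},\quad L_{i+1,j+1,k+2}=L_{i,j,k},$$ and the same three identities hold for $R$.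
   Context: The $T$-system is $T_{i,j,k+1}T_{i,j,k-1}=T_{i+1,j,k}T_{i-1,j,k}+T_{i,j+1,k}T_{i,j-1,k}$ for $k\ge1$, $i+j+k\equiv0\pmod2$, on points $(i,j,k)\in\mathbb{Z}^2\times\mathbb{Z}_{\ge0}$ with $i+j+k\equiv1\pmod2$. *)

From Stdlib Require Import Reals ZArith.
Open Scope R_scope.

(* T is a function on Z^3; only points (i,j,k) with k >= 0 and
   i+j+k odd are meaningful. *)

Definition initial_data (t : Z -> Z -> R) (T : Z -> Z -> Z -> R) : Prop :=
  forall i j : Z, T i j ((i + j + 1) mod 2)%Z = t i j.

Definition T_system (T : Z -> Z -> Z -> R) : Prop :=
  forall i j k : Z, (1 <= k)%Z -> ((i + j + k) mod 2 = 0)%Z ->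
    T i j (k + 1)%Z * T i j (k - 1)%Z =
      T (i + 1)%Z j k * T (i - 1)%Z j k + T i (j + 1)%Z k * T i (j - 1)%Z k.

Definition Lratio (T : Z -> Z -> Z -> R) (i j k : Z) : R :=
  (T (i + 1)%Z j k * T (i - 1)%Z j k) / (T i j (k + 1)%Z * T i j (k - 1)%Z).

Definition Rratio (T : Z -> Z -> Z -> R) (i j k : Z) : R :=
  (T i (j + 1)%Z k * T i (j - 1)%Z k) / (T i j (k + 1)%Z * T i j (k - 1)%Z).

(* For a translation (a,b) of the (i,j)-plane with a+b even,
   the translated array still solves the T-system.  If t is (a,b)-periodic,
   the translated array also has the same initial data as T.  A positive
   solution is determined by two consecutive levels, so T itself is
   (a,b)-periodic, and hence so are L and R.  This covers the shifts (2,2)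
   and (m,-m).

   Extend T to level -1 so that the T-system
   also holds at level 0, and study the diagonal growth ratio
   rho(i,j,k) = T(i+1,j+1,k+2) / T(i,j,k).
   At levels -1 and 0 it is an explicit expression in t; since t is
   (2,2)-periodic, that expression is invariant under (i,j) -> (i+1,j+1).  If
   rho(.,.,k) is invariant under this diagonal step, then the products of
   the horizontal and of the vertical neighbours of (i,j,k) grow by the same
   factor from level k to level k+2.  The T-system then forces the product
   of the two centre values to grow by that factor too.
   Two consequences follow: diagonal invariance propagates from levels
   k-1, k to level k+1, and L, R are invariant under (1,1,2). *)

From Stdlib Require Import Reals ZArith Lia Lra.
Open Scope R_scope.

Ltac parity := Z.to_euclidean_division_equations; lia.

Lemma Z_two_step_ind (P : Z -> Prop) (k0 : Z) :
  P k0 -> P (k0 + 1)%Z ->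
  (forall k, (k0 <= k)%Z -> P k -> P (k + 1)%Z -> P (k + 2)%Z) ->
  forall k, (k0 <= k)%Z -> P k.
Proof.
  intros H0 H1 Hstep.
  assert (Hpair : forall n : nat,
             P (k0 + Z.of_nat n)%Z /\ P (k0 + Z.of_nat n + 1)%Z).
  { induction n as [|n [IHa IHb]].
    - rewrite Z.add_0_r. split; assumption.
    - rewrite Nat2Z.inj_succ, Z.add_succ_r. split; [exact IHb|].
      replace (Z.succ (k0 + Z.of_nat n) + 1)%Z
        with (k0 + Z.of_nat n + 2)%Z by ring.
      apply Hstep; [lia | exact IHa | exact IHb]. }
  intros k hk.
  replace k with (k0 + Z.of_nat (Z.to_nat (k - k0)))%Z by lia.
  apply Hpair.
Qed.

(* Solutions of the T-system from a given level on.  [T_system T] is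
   literally [solves_from 1 T]. *)
Definition solves_from (k0 : Z) (U : Z -> Z -> Z -> R) : Prop :=
  forall i j k : Z, (k0 <= k)%Z -> ((i + j + k) mod 2 = 0)%Z ->
    U i j (k + 1)%Z * U i j (k - 1)%Z =
      U (i + 1)%Z j k * U (i - 1)%Z j k + U i (j + 1)%Z k * U i (j - 1)%Z k.

Definition positive_at (k : Z) (U : Z -> Z -> Z -> R) : Prop :=
  forall i j : Z, ((i + j + k) mod 2 = 1)%Z -> 0 < U i j k.

Definition positive_from (k0 : Z) (U : Z -> Z -> Z -> R) : Prop :=
  forall k : Z, (k0 <= k)%Z -> positive_at k U.

Definition agree_at (k : Z) (U V : Z -> Z -> Z -> R) : Prop :=
  forall i j : Z, ((i + j + k) mod 2 = 1)%Z -> V i j k = U i j k.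

(* A solution positive on its two base levels is positive everywhere above,
   because each new value is a positive sum divided by a positive value. *)
Lemma solution_positive (k0 : Z) (U : Z -> Z -> Z -> R) :
  solves_from k0 U -> positive_at (k0 - 1) U -> positive_at k0 U ->
  positive_from (k0 - 1) U.
Proof.
  intros sys P0 P1.
  refine (Z_two_step_ind (fun k => positive_at k U) (k0 - 1) _ _ _); [exact P0 | now replace (k0 - 1 + 1)%Z with k0 by ring|].
  intros k hk Pk Pk1 i j h.
  pose proof (sys i j (k + 1)%Z ltac:(lia) ltac:(parity)) as e.
  replace (k + 1 + 1)%Z with (k + 2)%Z in e by ring.
  rewrite Z.add_simpl_r in e.
  assert (0 < U i j k) as Hk by (apply Pk; parity).
  apply (Rmult_lt_reg_r (U i j k)); [exact Hk|].
  rewrite Rmult_0_l, e.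
  apply Rplus_lt_0_compat; apply Rmult_lt_0_compat; apply Pk1; parity.
Qed.

Lemma solution_unique (k0 : Z) (U V : Z -> Z -> Z -> R) :
  solves_from k0 U -> solves_from k0 V -> positive_from (k0 - 1) U ->
  agree_at (k0 - 1) U V -> agree_at k0 U V ->
  forall k, (k0 - 1 <= k)%Z -> agree_at k U V.
Proof.
  intros sysU sysV posU A0 A1.
  refine (Z_two_step_ind (fun k => agree_at k U V) (k0 - 1) _ _ _); [exact A0 | now replace (k0 - 1 + 1)%Z with k0 by ring|].
  intros k hk Ak Ak1 i j h.
  pose proof (sysU i j (k + 1)%Z ltac:(lia) ltac:(parity)) as eU.
  pose proof (sysV i j (k + 1)%Z ltac:(lia) ltac:(parity)) as eV.
  replace (k + 1 + 1)%Z with (k + 2)%Z in eU, eV by ring.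
  rewrite Z.add_simpl_r in eU, eV.
  rewrite !Ak1, Ak, <- eU in eV by parity.
  assert (0 < U i j k) as Hk by (apply (posU k); [lia | parity]).
  exact (Rmult_eq_reg_r _ _ _ eV (Rgt_not_eq _ _ Hk)).
Qed.

Definition translate (a b : Z) (U : Z -> Z -> Z -> R) : Z -> Z -> Z -> R :=
  fun i j k => U (i + a)%Z (j + b)%Z k.

Lemma translate_solves (k0 a b : Z) (U : Z -> Z -> Z -> R) :
  ((a + b) mod 2 = 0)%Z -> solves_from k0 U -> solves_from k0 (translate a b U).
Proof.
  intros hab sys i j k hk h. unfold translate.
  replace (i + 1 + a)%Z with (i + a + 1)%Z by ring.
  replace (i - 1 + a)%Z with (i + a - 1)%Z by ring.
  replace (j + 1 + b)%Z with (j + b + 1)%Z by ring.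
  replace (j - 1 + b)%Z with (j + b - 1)%Z by ring.
  apply sys; [exact hk | parity].
Qed.

Lemma ratios_translation_invariant (T : Z -> Z -> Z -> R) (a b : Z) :
  (forall k, (0 <= k)%Z -> agree_at k T (translate a b T)) ->
  forall i j k, (1 <= k)%Z -> ((i + j + k) mod 2 = 0)%Z ->
    Lratio T (i + a)%Z (j + b)%Z k = Lratio T i j k /\
    Rratio T (i + a)%Z (j + b)%Z k = Rratio T i j k.
Proof.
  unfold agree_at, translate. intros Hinv i j k hk c.
  unfold Lratio, Rratio.
  replace (i + a + 1)%Z with (i + 1 + a)%Z by ring.
  replace (i + a - 1)%Z with (i - 1 + a)%Z by ring.
  replace (j + b + 1)%Z with (j + 1 + b)%Z by ring.
  replace (j + b - 1)%Z with (j - 1 + b)%Z by ring.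
  rewrite !Hinv by (lia || parity).
  split; reflexivity.
Qed.

(* The extension of T to level -1 that makes the T-system hold at level 0. *)
Definition extend_below (T : Z -> Z -> Z -> R) (i j k : Z) : R :=
  if Z.eqb k (-1) then
    (T (i + 1)%Z j 0%Z * T (i - 1)%Z j 0%Z + T i (j + 1)%Z 0%Z * T i (j - 1)%Z 0%Z)
      / T i j 1%Z
  else T i j k.

Lemma extend_below_eq (T : Z -> Z -> Z -> R) (i j k : Z) :
  k <> (-1)%Z -> extend_below T i j k = T i j k.
Proof. intros hk. unfold extend_below. destruct (Z.eqb_spec k (-1)); [lia | reflexivity]. Qed.

Lemma extend_below_solves (T : Z -> Z -> Z -> R) :
  solves_from 1 T -> (forall i j, ((i + j) mod 2 = 0)%Z -> T i j 1%Z <> 0) ->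
  solves_from 0 (extend_below T).
Proof.
  intros sys nz i j k hk h.
  rewrite !(extend_below_eq T _ _ k) by lia.
  rewrite (extend_below_eq T i j (k + 1)) by lia.
  destruct (Z.eq_dec k 0) as [->|k_ne0].
  - unfold extend_below; simpl. field. apply nz. parity.
  - rewrite extend_below_eq by lia. apply sys; [lia | exact h].
Qed.

Lemma extend_below_positive (T : Z -> Z -> Z -> R) :
  positive_at 0 T -> positive_at 1 T -> positive_at (-1) (extend_below T).
Proof.
  intros P0 P1 i j h. unfold extend_below; simpl.
  apply Rdiv_lt_0_compat; [|apply P1; parity].
  apply Rplus_lt_0_compat; apply Rmult_lt_0_compat; apply P0; parity.
Qed.

Lemma extend_below_ratios (T : Z -> Z -> Z -> R) (i j k : Z) :
  (1 <= k)%Z ->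
  Lratio (extend_below T) i j k = Lratio T i j k /\
  Rratio (extend_below T) i j k = Rratio T i j k.
Proof.
  intros hk. unfold Lratio, Rratio.
  rewrite !extend_below_eq by lia. split; reflexivity.
Qed.

Section DiagonalRatio.

Variable U : Z -> Z -> Z -> R.
Hypothesis U_pos : positive_from (-1) U.
Hypothesis U_sys : solves_from 0 U.

Definition rho (i j k : Z) : R := U (i + 1)%Z (j + 1)%Z (k + 2)%Z / U i j k.

Definition diag_invariant (k : Z) : Prop :=
  forall i j : Z, ((i + j + k) mod 2 = 1)%Z -> rho (i + 1)%Z (j + 1)%Z k = rho i j k.

Lemma U_neq0 (i j k : Z) :
  (-1 <= k)%Z -> ((i + j + k) mod 2 = 1)%Z -> U i j k <> 0.
Proof. intros hk h. apply Rgt_not_eq, (U_pos k hk), h. Qed.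

Lemma rho_pos (i j k : Z) :
  (-1 <= k)%Z -> ((i + j + k) mod 2 = 1)%Z -> 0 < rho i j k.
Proof.
  intros hk h. apply Rdiv_lt_0_compat; apply U_pos; (lia || parity).
Qed.

Lemma U_diag (i j k : Z) :
  (-1 <= k)%Z -> ((i + j + k) mod 2 = 1)%Z ->
  rho i j k * U i j k = U (i + 1)%Z (j + 1)%Z (k + 2)%Z.
Proof. intros hk h. unfold rho. field. apply U_neq0; assumption. Qed.

Lemma diagonal_lift (i j k : Z) :
  (0 <= k)%Z -> ((i + j + k) mod 2 = 0)%Z ->
  U (i + 1 + 1)%Z (j + 1)%Z (k + 2)%Z = rho (i + 1)%Z j k * U (i + 1)%Z j k /\
  U (i + 1 - 1)%Z (j + 1)%Z (k + 2)%Z = rho (i - 1)%Z j k * U (i - 1)%Z j k /\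
  U (i + 1)%Z (j + 1 + 1)%Z (k + 2)%Z = rho i (j + 1)%Z k * U i (j + 1)%Z k /\
  U (i + 1)%Z (j + 1 - 1)%Z (k + 2)%Z = rho i (j - 1)%Z k * U i (j - 1)%Z k /\
  U (i + 1)%Z (j + 1)%Z (k + 2 + 1)%Z = rho i j (k + 1) * U i j (k + 1) /\
  U (i + 1)%Z (j + 1)%Z (k + 2 - 1)%Z = rho i j (k - 1) * U i j (k - 1).
Proof.
  intros hk c.
  repeat split; rewrite U_diag by (lia || parity); f_equal; ring.
Qed.

Lemma rho_cross (k : Z) (D : diag_invariant k) (i j : Z) :
  ((i + j + k) mod 2 = 0)%Z ->
  rho i (j + 1)%Z k * rho i (j - 1)%Z k = rho (i + 1)%Z j k * rho (i - 1)%Z j k.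
Proof.
  intros c.
  rewrite <- (D (i - 1)%Z j), <- (D i (j - 1)%Z) by parity.
  rewrite !Z.sub_add. ring.
Qed.

(* Mediant step: if A and B both grow by the factor r = rho(i+1,j,k) *
   rho(i-1,j,k) from level k to level k+2, then so does their sum, which
   is the product of the two centre values. *)
Lemma rho_balance (k : Z) (hk : (0 <= k)%Z) (D : diag_invariant k) (i j : Z) :
  ((i + j + k) mod 2 = 0)%Z ->
  rho i j (k + 1) * rho i j (k - 1) = rho (i + 1)%Z j k * rho (i - 1)%Z j k.
Proof.
  intros c.
  destruct (diagonal_lift i j k hk c) as (Ea & Ea' & Eb & Eb' & Ec & Ec').
  pose proof (U_sys i j k hk c) as sys0.
  pose proof (U_sys (i + 1)%Z (j + 1)%Z (k + 2)%Z ltac:(lia) ltac:(parity)) as sys2.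
  rewrite Ea, Ea', Eb, Eb', Ec, Ec' in sys2.
  pose proof (rho_cross k D i j c) as cross.
  apply (Rmult_eq_reg_r (U i j (k + 1) * U i j (k - 1)));
    [|apply Rmult_integral_contrapositive; split; apply U_neq0; (lia || parity)].
  transitivity ((rho i j (k + 1) * U i j (k + 1)) * (rho i j (k - 1) * U i j (k - 1)));
    [ring|].
  rewrite sys2, sys0.
  transitivity (rho (i + 1)%Z j k * rho (i - 1)%Z j k * (U (i + 1)%Z j k * U (i - 1)%Z j k)
                + rho i (j + 1)%Z k * rho i (j - 1)%Z k * (U i (j + 1)%Z k * U i (j - 1)%Z k));
    [ring|].
  rewrite cross. ring.
Qed.

Lemma diag_invariant_step (k : Z) :
  (0 <= k)%Z -> diag_invariant (k - 1) -> diag_invariant k -> diag_invariant (k + 1).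
Proof.
  intros hk Dm D i j h.
  pose proof (rho_balance k hk D (i + 1) (j + 1) ltac:(parity)) as B1.
  pose proof (rho_balance k hk D i j ltac:(parity)) as B0.
  pose proof (D (i - 1)%Z j ltac:(parity)) as D_left. rewrite Z.sub_add in D_left.
  rewrite (D (i + 1)%Z j), Z.add_simpl_r, D_left, (Dm i j) in B1 by parity.
  apply (Rmult_eq_reg_r (rho i j (k - 1)));
    [|apply Rgt_not_eq, rho_pos; (lia || parity)].
  rewrite B0, B1. ring.
Qed.

Lemma diag_invariant_all :
  diag_invariant (-1) -> diag_invariant 0 -> forall k, (-1 <= k)%Z -> diag_invariant k.
Proof.
  intros Dm1 D0. refine (Z_two_step_ind diag_invariant (-1) _ _ _); [exact Dm1 | exact D0|].
  intros k hk Dk Dk1.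
  replace (k + 2)%Z with (k + 1 + 1)%Z by ring.
  apply diag_invariant_step; [lia | now rewrite Z.add_simpl_r | exact Dk1].
Qed.

Lemma ratios_diag_shift (k : Z) (hk : (0 <= k)%Z) (D : diag_invariant k) (i j : Z) :
  ((i + j + k) mod 2 = 0)%Z ->
  Lratio U (i + 1)%Z (j + 1)%Z (k + 2)%Z = Lratio U i j k /\
  Rratio U (i + 1)%Z (j + 1)%Z (k + 2)%Z = Rratio U i j k.
Proof.
  intros c. unfold Lratio, Rratio.
  destruct (diagonal_lift i j k hk c) as (Ea & Ea' & Eb & Eb' & Ec & Ec').
  rewrite Ea, Ea', Eb, Eb', Ec, Ec'.
  pose proof (rho_balance k hk D i j c) as balance.
  pose proof (rho_cross k D i j c) as cross.
  assert (U i j (k + 1) <> 0) by (apply U_neq0; (lia || parity)).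
  assert (U i j (k - 1) <> 0) by (apply U_neq0; (lia || parity)).
  assert (rho i j (k + 1) <> 0) by (apply Rgt_not_eq, rho_pos; (lia || parity)).
  assert (rho i j (k - 1) <> 0) by (apply Rgt_not_eq, rho_pos; (lia || parity)).
  split.
  - transitivity ((rho (i + 1)%Z j k * rho (i - 1)%Z j k)
                  / (rho i j (k + 1) * rho i j (k - 1))
                  * (U (i + 1)%Z j k * U (i - 1)%Z j k / (U i j (k + 1) * U i j (k - 1))));
      [field; repeat split; assumption|].
    rewrite <- balance. field. repeat split; assumption.
  - transitivity ((rho i (j + 1)%Z k * rho i (j - 1)%Z k)
                  / (rho i j (k + 1) * rho i j (k - 1))
                  * (U i (j + 1)%Z k * U i (j - 1)%Z k / (U i j (k + 1) * U i j (k - 1))));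
      [field; repeat split; assumption|].
    rewrite cross, <- balance. field. repeat split; assumption.
Qed.

End DiagonalRatio.

Section InitialData.

Variable t : Z -> Z -> R.
Variable T : Z -> Z -> Z -> R.
Hypothesis htpos : forall i j : Z, 0 < t i j.
Hypothesis hinit : initial_data t T.
Hypothesis hsys : T_system T.

Lemma T_level0 (a b : Z) : ((a + b) mod 2 = 1)%Z -> T a b 0%Z = t a b.
Proof. intros h. rewrite <- (hinit a b). f_equal. parity. Qed.

Lemma T_level1 (a b : Z) : ((a + b) mod 2 = 0)%Z -> T a b 1%Z = t a b.
Proof. intros h. rewrite <- (hinit a b). f_equal. parity. Qed.

Lemma T_positive : positive_from 0 T.
Proof.
  apply (solution_positive 1 T hsys).
  - intros i j h. rewrite T_level0 by parity. apply htpos.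
  - intros i j h. rewrite T_level1 by parity. apply htpos.
Qed.

(* If t is (a,b)-periodic with a+b even, then so is T: the translated array
   solves the T-system with the same initial data. *)
Lemma T_translation_invariant (a b : Z) :
  ((a + b) mod 2 = 0)%Z -> (forall i j, t (i + a)%Z (j + b)%Z = t i j) ->
  forall k, (0 <= k)%Z -> agree_at k T (translate a b T).
Proof.
  intros hab ht_ab.
  apply (solution_unique 1 T (translate a b T) hsys (translate_solves 1 a b T hab hsys)
           T_positive);
    intros i j h; unfold translate.
  - rewrite !T_level0 by parity. apply ht_ab.
  - rewrite !T_level1 by parity. apply ht_ab.
Qed.

Let Te : Z -> Z -> Z -> R := extend_below T.

Lemma extension_solves : solves_from 0 Te.
Proof.
  apply extend_below_solves; [exact hsys|].
  intros i j h. rewrite T_level1 by exact h. apply Rgt_not_eq, htpos.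
Qed.

Lemma extension_positive : positive_from (-1) Te.
Proof.
  apply (solution_positive 0 Te extension_solves).
  - apply extend_below_positive; apply T_positive; lia.
  - intros i j h. unfold Te. rewrite extend_below_eq by lia. apply T_positive; [lia | exact h].
Qed.

Definition cross_sum (a b : Z) : R :=
  t (a + 1)%Z b * t (a - 1)%Z b + t a (b + 1)%Z * t a (b - 1)%Z.

Lemma cross_sum_pos (a b : Z) : 0 < cross_sum a b.
Proof. unfold cross_sum. apply Rplus_lt_0_compat; apply Rmult_lt_0_compat; apply htpos. Qed.

Lemma rho_level_m1 (i j : Z) :
  ((i + j) mod 2 = 0)%Z -> rho Te i j (-1) = t i j * t (i + 1)%Z (j + 1)%Z / cross_sum i j.
Proof.
  intros h. unfold rho, Te, extend_below; simpl.
  rewrite !T_level0, !T_level1 by parity.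
  pose proof (htpos i j). pose proof (cross_sum_pos i j). unfold cross_sum in *.
  field. lra.
Qed.

Lemma rho_level0 (i j : Z) :
  ((i + j) mod 2 = 1)%Z ->
  rho Te i j 0 = cross_sum (i + 1)%Z (j + 1)%Z / (t i j * t (i + 1)%Z (j + 1)%Z).
Proof.
  intros h. unfold rho, Te. rewrite !extend_below_eq by lia.
  pose proof (hsys (i + 1)%Z (j + 1)%Z 1%Z ltac:(lia) ltac:(parity)) as e.
  simpl in e |- *.
  rewrite T_level0 in e |- * by parity.
  rewrite !T_level1 in e by parity.
  pose proof (htpos i j). pose proof (htpos (i + 1)%Z (j + 1)%Z).
  unfold cross_sum. rewrite <- e. field. lra.
Qed.

Hypothesis ht_2 : forall i j : Z, t (i + 2)%Z (j + 2)%Z = t i j.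

Lemma t_diag2 (a b : Z) : t (a + 1 + 1)%Z (b + 1 + 1)%Z = t a b.
Proof. rewrite <- (ht_2 a b). f_equal; ring. Qed.

Lemma cross_sum_diag (a b : Z) : cross_sum (a + 1)%Z (b + 1)%Z = cross_sum a b.
Proof.
  unfold cross_sum. rewrite !Z.add_simpl_r.
  replace (t (a + 1 + 1)%Z (b + 1)%Z) with (t a (b - 1)%Z)
    by (rewrite <- t_diag2; f_equal; ring).
  replace (t (a + 1)%Z (b + 1 + 1)%Z) with (t (a - 1)%Z b)
    by (rewrite <- t_diag2; f_equal; ring).
  ring.
Qed.

Lemma extension_diag_invariant : forall k, (-1 <= k)%Z -> diag_invariant Te k.
Proof.
  apply (diag_invariant_all Te extension_positive extension_solves).
  - intros i j h. rewrite !rho_level_m1, cross_sum_diag, t_diag2 by parity.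
    f_equal. ring.
  - intros i j h. rewrite !rho_level0, cross_sum_diag, t_diag2 by parity.
    f_equal. ring.
Qed.

Lemma T_ratios_diag_shift (i j k : Z) :
  (1 <= k)%Z -> ((i + j + k) mod 2 = 0)%Z ->
  Lratio T (i + 1)%Z (j + 1)%Z (k + 2)%Z = Lratio T i j k /\
  Rratio T (i + 1)%Z (j + 1)%Z (k + 2)%Z = Rratio T i j k.
Proof.
  intros hk c.
  destruct (ratios_diag_shift Te extension_positive extension_solves k ltac:(lia)
              (extension_diag_invariant k ltac:(lia)) i j c) as [HL HR].
  destruct (extend_below_ratios T i j k hk) as [EL ER].
  destruct (extend_below_ratios T (i + 1) (j + 1) (k + 2) ltac:(lia)) as [EL' ER'].
  unfold Te in HL, HR. split; congruence.
Qed.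

End InitialData.

Theorem mainTheorem7 (m : Z) (t : Z -> Z -> R) (T : Z -> Z -> Z -> R)
  (hm : (1 <= m)%Z)
  (htpos : forall i j : Z, 0 < t i j)
  (ht_m : forall i j : Z, t (i + m)%Z (j - m)%Z = t i j)
  (ht_2 : forall i j : Z, t (i + 2)%Z (j + 2)%Z = t i j)
  (hinit : initial_data t T)
  (hsys : T_system T) :
  forall i j k : Z, (1 <= k)%Z -> ((i + j + k) mod 2 = 0)%Z ->
    (Lratio T (i + 2)%Z (j + 2)%Z k = Lratio T i j k /\
     Lratio T (i + m)%Z (j - m)%Z k = Lratio T i j k /\
     Lratio T (i + 1)%Z (j + 1)%Z (k + 2)%Z = Lratio T i j k) /\
    (Rratio T (i + 2)%Z (j + 2)%Z k = Rratio T i j k /\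
     Rratio T (i + m)%Z (j - m)%Z k = Rratio T i j k /\
     Rratio T (i + 1)%Z (j + 1)%Z (k + 2)%Z = Rratio T i j k).
Proof.
  intros i j k hk c.
  pose proof (T_translation_invariant t T htpos hinit hsys 2 2 ltac:(parity) ht_2)
    as periodic_2.
  pose proof (T_translation_invariant t T htpos hinit hsys m (- m) ltac:(parity) ht_m)
    as periodic_m.
  destruct (ratios_translation_invariant T 2 2 periodic_2 i j k hk c) as [L2 R2].
  destruct (ratios_translation_invariant T m (- m) periodic_m i j k hk c) as [Lm Rm].
  destruct (T_ratios_diag_shift t T htpos hinit hsys ht_2 i j k hk c) as [Ld Rd].
  repeat split; assumption.
Qed.
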